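(* Let $n,m\ge1$ and $C\in\mathbb{R}^{2m\times 2n}$. Suppose there exists a nonzero real $2n\times 2\ell$ matrix $T_1$ ($\ell\ge 1$) with $\mathrm{Range}(T_1)=\mathrm{Ker}(C)\cap\mathrm{Ker}(C\Sigma_n)$ and $\Sigma_nT_1=T_1\Sigma_\ell$. Let $G\in\mathbb{R}^{2n\times 2n}$ be symmetric and suppose $\mathrm{Range}(T_1)$ is invariant under $G$ (i.e. $G\,\mathrm{Range}(T_1)\subseteq\mathrm{Range}(T_1)$). Then the linear quantum system determined by $(G,C)$ has a DF subsystem with DF mode $T_1^\top\hat x$; that is, with $A=\Sigma_n(G+C^\top\Sigma_mC/2)$ and $\mathcal{O}=(C^\top,A^\top C^\top,\ldots,(A^\top)^{2n-1}C^\top)^\top$, one has $\mathcal{O}T_1=O$ and $\mathcal{O}\Sigma_nT_1=O$.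
   Context: For $k\ge1$, $\Sigma_k=\mathrm{diag}\{\Sigma,\ldots,\Sigma\}$ ($2k\times2k$) with $\Sigma=\begin{pmatrix}0&1\\-1&0\end{pmatrix}$. The linear quantum system determined by $(G,C)$ is $d\hat x=A\hat x\,dt+\Sigma_nC^\top\Sigma_m\,d\hat{\mathcal W}$, $d\hat{\mathcal W}^{\rm out}=C\hat x\,dt+d\hat{\mathcal W}$ with $A=\Sigma_n(G+C^\top\Sigma_mC/2)$, where $\hat x$ is a vector of $n$ canonical pairs with $\hat x\hat x^\top-(\hat x\hat x^\top)^\top=i\Sigma_n$. A DF mode is a variable $T^\top\hat x$ with $T^\top\Sigma_nT=\Sigma_\ell$ whose columns span a subspace lying in $\mathrm{Ker}(\mathcal{O})\cap\mathrm{Ker}(\mathcal{O}\Sigma_n)$ (equivalently uncontrollable w.r.t. the input $\hat{\mathcal W}$ and unobservable w.r.t. the output $\hat{\mathcal W}^{\rm out}$). *)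

From HB Require Import structures.
From mathcomp Require Import all_boot all_order all_algebra.
Set Implicit Arguments. Unset Strict Implicit. Unset Printing Implicit Defensive.
Import Order.TTheory GRing.Theory Num.Theory.
Local Open Scope ring_scope.

(* Sigma_k = diag(Sigma, ..., Sigma), 2k x 2k, Sigma = [[0,1],[-1,0]] *)
Definition Sigma (R : nzRingType) (k : nat) : 'M[R]_(2 * k) :=
  \matrix_(i < 2 * k, j < 2 * k)
    (if odd j && (i.+1 == j :> nat) then 1
     else if odd i && (j.+1 == i :> nat) then -1 else 0).

(* Column space (Range) of a matrix M, as a row space: rows of M^T. *)
Definition colspace (R : fieldType) (p q : nat) (M : 'M[R]_(p, q)) := (M^T)%MS.

(* Kernel {x | M x = 0} (column vectors), as a row space: kermx (M^T). *)
Definition kerspace (R : fieldType) (p q : nat) (M : 'M[R]_(p, q)) := kermx (M^T).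

Definition sysA (R : fieldType) (n m : nat) (G : 'M[R]_(2 * n))
  (C : 'M[R]_(2 * m, 2 * n)) : 'M[R]_(2 * n) :=
  Sigma R n *m (G + (2%:R)^-1 *: (C^T *m Sigma R m *m C)).

Definition obsv (R : fieldType) (n m : nat) (G : 'M[R]_(2 * n))
  (C : 'M[R]_(2 * m, 2 * n)) :=
  \mxcol_(k < 2 * n) (C *m (sysA G C) ^+ k).

From HB Require Import structures.
From mathcomp Require Import all_boot all_order all_algebra.
Set Implicit Arguments. Unset Strict Implicit. Unset Printing Implicit Defensive.
Import Order.TTheory GRing.Theory Num.Theory.
Local Open Scope ring_scope.

(* Since [C T1 = 0], the drift [A] acts on [Range T1] as [Sigma_n G], and
   [G]-invariance together with [Sigma_n T1 = T1 Sigma_l] gives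
   [A T1 = T1 B] for some [B].  Hence [C A^k T1 = C T1 B^k = 0] for every
   [k], i.e. [O T1 = 0]; and [O Sigma_n T1 = O T1 Sigma_l = 0]. *)

Section ColumnSpaces.

Variable F : fieldType.

Lemma colspace_sub_kerspace p q r (M : 'M[F]_(p, q)) (T : 'M_(q, r)) :
  (colspace T <= kerspace M)%MS = (M *m T == 0).
Proof. by rewrite /colspace /kerspace sub_kermx -trmx_mul trmx_eq0. Qed.

Lemma colspace_subP p q r (T : 'M[F]_(p, q)) (B : 'M_(p, r)) :
  reflect (exists K : 'M_(q, r), B = T *m K) (colspace B <= colspace T)%MS.
Proof.
rewrite /colspace; apply: (iffP submxP) => [[K defBt] | [K ->]].
  by exists K^T; rewrite -[B]trmxK defBt trmx_mul trmxK.
by exists K^T; rewrite trmx_mul.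
Qed.

End ColumnSpaces.

Lemma mulmx_exp_intertwine (R : pzRingType) n p
    (A : 'M[R]_n) (T : 'M_(n, p)) (B : 'M_p) :
  A *m T = T *m B -> forall k, A ^+ k *m T = T *m B ^+ k.
Proof.
move=> AT; elim=> [|k IHk]; first by rewrite !expr0 mul1mx mulmx1.
by rewrite !exprS -!mulmxE -mulmxA IHk mulmxA AT mulmxA.
Qed.

Section LinearQuantumSystem.

Variables (R : fieldType) (n m : nat).
Variables (G : 'M[R]_(2 * n)) (C : 'M[R]_(2 * m, 2 * n)).

Lemma sysA_mul_ker p (T : 'M_(2 * n, p)) :
  C *m T = 0 -> sysA G C *m T = Sigma R n *m G *m T.
Proof.
move=> CT; rewrite /sysA -(mulmxA _ (_ + _)) mulmxDl -scalemxAl -(mulmxA _ C) CT.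
by rewrite !mulmx0 scaler0 addr0 mulmxA.
Qed.

Lemma obsv_mul_eq0 p (T : 'M_(2 * n, p)) (B : 'M_p) :
  C *m T = 0 -> sysA G C *m T = T *m B -> obsv G C *m T = 0.
Proof.
move=> CT AT; rewrite /obsv mxcol_mul -[RHS]mxcol0; apply: eq_mxcol => k.
by rewrite -mulmxA (mulmx_exp_intertwine AT) mulmxA CT mul0mx.
Qed.

End LinearQuantumSystem.

Theorem proposition1 (R : realFieldType) (n m l : nat)
  (C : 'M[R]_(2 * m, 2 * n)) (T1 : 'M[R]_(2 * n, 2 * l))
  (G : 'M[R]_(2 * n)) :
  (1 <= n)%N -> (1 <= m)%N -> (1 <= l)%N ->
  T1 != 0 ->
  (colspace T1 == kerspace C :&: kerspace (C *m Sigma R n))%MS ->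
  Sigma R n *m T1 = T1 *m Sigma R l ->
  G^T = G ->
  (colspace (G *m T1) <= colspace T1)%MS ->
  obsv G C *m T1 = 0 /\ obsv G C *m (Sigma R n *m T1) = 0.
Proof.
move=> _ _ _ _ /eqmxP defT1 SigmaT1 _ /colspace_subP [K GT1].
have /eqP CT1 : C *m T1 == 0.
  by rewrite -colspace_sub_kerspace defT1 capmxSl.
have AT1 : sysA G C *m T1 = T1 *m (Sigma R l *m K).
  by rewrite sysA_mul_ker // -mulmxA GT1 mulmxA SigmaT1 mulmxA.
have obsT1 := obsv_mul_eq0 CT1 AT1.
by split; rewrite // SigmaT1 mulmxA obsT1 mul0mx.
Qed.
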